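(* Let $p\ge 1$, let $\Theta$ be a $p\times p$ correlation matrix (real symmetric positive semi-definite with all diagonal entries equal to $1$), and let $\alpha\in\mathbb{R}^p$ with $\alpha_j\neq 0$ for all $j$. Define the $p\times p$ matrix $g(\Theta,\alpha)$ by $g_{ij}(\Theta,\alpha)=\Theta_{ij}\alpha_i\alpha_j$ for $i\neq j$ and $g_{ii}(\Theta,\alpha)=1$; equivalently $g(\Theta,\alpha)=\Theta\circ\alpha\alpha^{t}+I-D_\alpha^2$, where $\circ$ is the Hadamard (entrywise) product and $D_\alpha$ is the diagonal matrix with diagonal entries $\alpha_1,\dots,\alpha_p$. Let $\lambda_p$ be the minimal eigenvalue of $\Theta$, and let $\alpha_M=\max_j|\alpha_j|$ and $\alpha_m=\min_j|\alpha_j|$. If \[\lambda_p\ \ge\ \frac{\alpha_M^2-1}{\alpha_m^2},\] then $g(\Theta,\alpha)$ is positive semi-definite.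
   Context: The map $g$ is called the multiplicative link function. The hypothesis $\alpha_j\neq 0$ for all $j$ only ensures $\alpha_m>0$, so that the quotient in the condition is defined. *)

From mathcomp Require Import all_boot all_order all_algebra.
Set Implicit Arguments. Unset Strict Implicit. Unset Printing Implicit Defensive.
Import Order.TTheory GRing.Theory Num.Theory.
Local Open Scope ring_scope.

Definition psd (R : realFieldType) (p : nat) (A : 'M[R]_p) : Prop :=
  A^T = A /\ forall v : 'rV[R]_p, 0 <= (v *m A *m v^T) 0 0.

Definition correlation_matrix (R : realFieldType) (p : nat) (A : 'M[R]_p) : Prop :=
  psd A /\ forall i : 'I_p, A i i = 1.

Definition link_g (R : realFieldType) (p : nat) (Theta : 'M[R]_p) (alpha : 'rV[R]_p)
  : 'M[R]_p :=
  \matrix_(i, j) (if i == j then 1 else Theta i j * alpha 0 i * alpha 0 j).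

Definition alpha_max (R : realFieldType) (p : nat) (alpha : 'rV[R]_p) : R :=
  \big[Num.max/0]_(j < p) `|alpha 0 j|.

(* alpha_m = min_j |alpha_j|  (initial value alpha_M is irrelevant for p >= 1) *)
Definition alpha_min (R : realFieldType) (p : nat) (alpha : 'rV[R]_p) : R :=
  \big[Num.min/alpha_max alpha]_(j < p) `|alpha 0 j|.

(* Write g(Theta, alpha) = D Theta D + diag(1 - alpha_i^2) with D = diag(alpha).
   For a vector v and w = v D, the quadratic form of g at v is
   w Theta w^T + sum_i (1 - alpha_i^2) v_i^2, and w Theta w^T >= lam |w|^2,
   so it is at least sum_i (lam alpha_i^2 + 1 - alpha_i^2) v_i^2.  Since Theta
   is positive semi-definite, lam >= 0, hence
   lam alpha_i^2 >= lam alpha_m^2 >= alpha_M^2 - 1 >= alpha_i^2 - 1.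
   The Rayleigh bound w Theta w^T >= lam |w|^2 comes from the unitary
   diagonalisation of Theta, seen as a Hermitian matrix over R[i]. *)

From mathcomp Require Import all_boot all_order all_algebra.
From mathcomp Require Import complex spectral sesquilinear ring lra.
Import Order.TTheory GRing.Theory Num.Theory.
Local Open Scope ring_scope.
Local Open Scope sesquilinear_scope.

Set Implicit Arguments.
Unset Strict Implicit.
Unset Printing Implicit Defensive.

Section SpectralBound.
Variable C : numClosedFieldType.

Lemma spectral_diag_eigenvalue n (A : 'M[C]_n) i :
  A \is normalmx -> eigenvalue A (spectral_diag A 0 i).
Proof.
move=> /orthomx_spectralP A_eq; set P := spectralmx A in A_eq *.
have /unitarymxP PPt : P \is unitarymx := spectral_unitarymx A.
apply/eigenvalueP; exists (row i P).
  rewrite -row_mul {1}A_eq !mulmxA mulmxV ?spectral_unit // mul1mx.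
  by apply/rowP => j; rewrite mul_diag_mx !mxE.
apply/eqP => /(congr1 (fun x => x *m P^t*)); rewrite -row_mul PPt mul0mx.
by move=> /rowP/(_ i); rewrite !mxE eqxx => /eqP; rewrite oner_eq0.
Qed.

Lemma normalmx_form_ge n (A : 'M[C]_n) (c : C) :
  A \is normalmx -> (forall i, c <= spectral_diag A 0 i) ->
  forall w : 'rV_n, c * (w *m w^t*) 0 0 <= (w *m A *m w^t*) 0 0.
Proof.
move=> /orthomx_spectralP A_eq ge_c w; set P := spectralmx A in A_eq *.
have P_unitary : P \is unitarymx := spectral_unitarymx A.
pose u := w *m P^t*.
have uE : u^t* = P *m w^t* by rewrite /u trmx_mul map_mxM trmxCK.
have -> : w *m w^t* = u *m u^t*.
  rewrite uE mulmxA -(mulmxA w) -invmx_unitary //.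
  by rewrite mulVmx ?spectral_unit // mulmx1.
have -> : w *m A *m w^t* = u *m diag_mx (spectral_diag A) *m u^t*.
  by rewrite uE {1}A_eq invmx_unitary // !mulmxA.
rewrite mul_mx_diag -subr_ge0 !mxE mulr_sumr -sumrB; apply: sumr_ge0 => j _.
rewrite !mxE [_ * spectral_diag A 0 j]mulrC -mulrA -mulrBl.
by apply: mulr_ge0; [rewrite subr_ge0 | exact: mul_conjC_ge0].
Qed.

End SpectralBound.

Section RealSymmetric.
Variable R : rcfType.
Local Notation toC := (real_complex R).

Lemma map_real_complex_trmxC m n (M : 'M[R]_(m, n)) :
  (map_mx toC M)^t* = map_mx toC M^T.
Proof.
by apply/matrixP => i j; rewrite !mxE; apply/CrealP/complex_realP; exists (M j i).
Qed.

Lemma eigenvalue_real_complex n (T : 'M[R]_n) x :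
  eigenvalue (map_mx toC T) (toC x) = eigenvalue T x.
Proof. by rewrite !eigenvalue_root_char -map_char_poly fmorph_root. Qed.

Lemma symmetric_form_ge n (T : 'M[R]_n) (c : R) :
  T^T = T -> (forall mu, eigenvalue T mu -> c <= mu) ->
  forall v : 'rV_n, c * (v *m v^T) 0 0 <= (v *m T *m v^T) 0 0.
Proof.
move=> T_sym ge_c v; pose A := map_mx toC T.
(* The spectral values of A are real roots of char_poly T, hence >= c. *)
have A_herm : A \is hermsymmx.
  by apply/is_hermitianmxP; rewrite expr0 scale1r map_real_complex_trmxC T_sym.
have A_normal := hermitian_normalmx A_herm.
have ge_cC i : toC c <= spectral_diag A 0 i.
  have d_real : spectral_diag A 0 i \is Num.real.
    by move/mxOverP: (hermitian_spectral_diag_real A_herm); apply.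
  rewrite -(RRe_real d_real) lecR; apply: ge_c.
  by rewrite -eigenvalue_real_complex RRe_real //; apply: spectral_diag_eigenvalue.
have toC_entry (M : 'M[R]_1) : toC (M 0 0) = map_mx toC M 0 0 by rewrite mxE.
rewrite -lecR rmorphM /= !toC_entry !map_mxM -map_real_complex_trmxC.
exact: normalmx_form_ge.
Qed.

End RealSymmetric.

Lemma mulmx_trmx00 (R : comPzRingType) n (v : 'rV[R]_n) :
  (v *m v^T) 0 0 = \sum_i v 0 i ^+ 2.
Proof. by rewrite mxE; apply: eq_bigr => i _; rewrite mxE. Qed.

Lemma form_diag_mx (R : comPzRingType) n (v d : 'rV[R]_n) :
  (v *m diag_mx d *m v^T) 0 0 = \sum_i d 0 i * v 0 i ^+ 2.
Proof.
by rewrite mxE; apply: eq_bigr => i _; rewrite mul_mx_diag !mxE mulrAC mulrC.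
Qed.

Lemma sum_sqr_row_gt0 (R : realDomainType) n (v : 'rV[R]_n) :
  v != 0 -> 0 < \sum_i v 0 i ^+ 2.
Proof.
move=> v_neq0; rewrite lt_def sumr_ge0 ?andbT => [|i _]; last exact: sqr_ge0.
rewrite psumr_eq0 => [|i _]; last exact: sqr_ge0.
apply: contra v_neq0 => /allP v0; apply/eqP/rowP => i.
by rewrite mxE; apply/eqP; rewrite -sqrf_eq0; apply: v0; rewrite mem_index_enum.
Qed.

Lemma psd_eigenvalue_ge0 (R : realFieldType) n (A : 'M[R]_n) mu :
  psd A -> eigenvalue A mu -> 0 <= mu.
Proof.
move=> [_ A_form] /eigenvalueP [v vA v_neq0].
have := A_form v; rewrite vA -scalemxAl mxE mulmx_trmx00.
by rewrite pmulr_lge0 // sum_sqr_row_gt0.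
Qed.

Lemma psd_diag_conj_add_diag (R : rcfType) n (T : 'M[R]_n) (a d : 'rV[R]_n) lam :
  T^T = T -> (forall mu, eigenvalue T mu -> lam <= mu) ->
  (forall i, 0 <= lam * a 0 i ^+ 2 + d 0 i) ->
  psd (diag_mx a *m T *m diag_mx a + diag_mx d).
Proof.
move=> T_sym ge_lam weight_ge0; split.
  by rewrite linearD /= !trmx_mul !tr_diag_mx T_sym mulmxA.
move=> v; pose w := v *m diag_mx a.
have -> : v *m (diag_mx a *m T *m diag_mx a + diag_mx d) *m v^T
          = w *m T *m w^T + v *m diag_mx d *m v^T.
  by rewrite mulmxDr mulmxDl /w trmx_mul tr_diag_mx !mulmxA.
rewrite mxE; apply: le_trans (lerD (symmetric_form_ge T_sym ge_lam w) (lexx _)).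
rewrite mulmx_trmx00 form_diag_mx mulr_sumr -big_split /=.
apply: sumr_ge0 => i _.
rewrite /w mul_mx_diag mxE exprMn [_ * a 0 i ^+ 2]mulrC mulrA -mulrDl.
exact: mulr_ge0 (weight_ge0 i) (sqr_ge0 _).
Qed.

Lemma link_gE (R : realFieldType) p (Theta : 'M[R]_p) (alpha : 'rV[R]_p) :
  (forall i, Theta i i = 1) ->
  link_g Theta alpha = diag_mx alpha *m Theta *m diag_mx alpha
                       + diag_mx (\row_i (1 - alpha 0 i ^+ 2)).
Proof.
move=> Theta_diag; apply/matrixP => i j.
rewrite mxE [in RHS]mxE mul_mx_diag mxE mul_diag_mx !mxE.
by case: eqP => [->|_]; rewrite ?Theta_diag ?mulr1n ?mulr0n ?addr0; ring.
Qed.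

Section AlphaBounds.
Variables (R : realFieldType) (p : nat) (alpha : 'rV[R]_p).

Lemma alpha_max_ge i : `|alpha 0 i| <= alpha_max alpha.
Proof. by rewrite /alpha_max (bigD1 i) //= le_max lexx. Qed.

Lemma alpha_min_le i : alpha_min alpha <= `|alpha 0 i|.
Proof. by rewrite /alpha_min (bigD1 i) //= ge_min lexx. Qed.

Hypotheses (p_gt0 : (0 < p)%N) (alpha_neq0 : forall j, alpha 0 j != 0).

Lemma alpha_min_gt0 : 0 < alpha_min alpha.
Proof.
have alpha_max_gt0 : 0 < alpha_max alpha.
  by apply: lt_le_trans (alpha_max_ge (Ordinal p_gt0)); rewrite normr_gt0.
rewrite /alpha_min; elim/big_rec: _ => // i x _ x_gt0.
by rewrite lt_min normr_gt0 alpha_neq0.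
Qed.

Lemma alpha_sqr_bounds i :
  alpha_min alpha ^+ 2 <= alpha 0 i ^+ 2 <= alpha_max alpha ^+ 2.
Proof.
have am_ge0 : 0 <= alpha_min alpha := ltW alpha_min_gt0.
have aM_ge0 : 0 <= alpha_max alpha.
  exact: le_trans am_ge0 (le_trans (alpha_min_le i) (alpha_max_ge i)).
rewrite -[alpha 0 i ^+ 2]real_normK ?num_real //.
by rewrite !lerXn2r ?nnegrE ?normr_ge0 ?alpha_max_ge ?alpha_min_le.
Qed.

End AlphaBounds.

Theorem mainTheorem1 (R : rcfType) (p : nat) (hp : (0 < p)%N)
  (Theta : 'M[R]_p) (alpha : 'rV[R]_p) (lam : R)
  (hTheta : correlation_matrix Theta)
  (halpha : forall j : 'I_p, alpha 0 j != 0)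
  (hlam : eigenvalue Theta lam)
  (hlam_min : forall mu : R, eigenvalue Theta mu -> lam <= mu)
  (hbound : (alpha_max alpha ^+ 2 - 1) / (alpha_min alpha ^+ 2) <= lam) :
  psd (link_g Theta alpha).
Proof.
have [[Theta_sym _] Theta_diag] := hTheta.
have lam_ge0 : 0 <= lam := psd_eigenvalue_ge0 hTheta.1 hlam.
have am_gt0 := alpha_min_gt0 hp halpha.
have max_le : alpha_max alpha ^+ 2 - 1 <= lam * alpha_min alpha ^+ 2.
  by rewrite -ler_pdivrMr ?exprn_gt0.
rewrite link_gE //; apply: psd_diag_conj_add_diag Theta_sym hlam_min _ => i.
have /andP [min_le le_max] := alpha_sqr_bounds hp halpha i.
have := ler_wpM2l lam_ge0 min_le; rewrite mxE; lra.
Qed.
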